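(* Assume $\delta>d$, $\alpha=\gamma/(\delta-d)$, and that $f$ is not a polynomial product. Then on $\mathbb{C}^2\setminus B_f$ the limits $$G_z^\lambda(w)=\lim_{n\to\infty}\frac{1}{\delta^n}\log^+|Q_z^n(w)|,\qquad G_f(z,w)=\lim_{n\to\infty}\frac{1}{\delta^n}\log^+|f^n(z,w)|$$ exist and satisfy $G_z^\lambda(w)=\alpha G_p(z)$ and $G_f(z,w)=\max\{\alpha,1\}G_p(z)$, where $|(z,w)|=\max\{|z|,|w|\}$.
   Context: Let $p(z)=z^\delta+O(z^{\delta-1})$ be a monic polynomial of degree $\delta\ge 2$, and let $q(z,w)=b(z)w^d+(\text{terms of lower degree in } w)$ be a polynomial with $d=\deg_w q\ge 2$, where $b$ is a monic polynomial of degree $\gamma\ge 0$. Let $f(z,w)=(p(z),q(z,w))$; $f$ is a polynomial product if $q$ does not depend on $z$. Write $Q_z^n=q_{p^{n-1}(z)}\circ\cdots\circ q_{p(z)}\circ q_z$ with $q_z=q(z,\cdot)$, so $f^n(z,w)=(p^n(z),Q_z^n(w))$. Let $A_p=\{z: p^n(z)\to\infty\}$ and $G_p(z)=\lim_n\delta^{-n}\log^+|p^n(z)|$. For $\delta>d$, $\alpha=\max\{n_j/(\delta-m_j)\}$ over monomials $z^{n_j}w^{m_j}$ appearing in $q$ with nonzero coefficient. Let $W_R=\{(z,w):|z|>R,\ |w|>R|z|^\alpha\}$, fix $R$ large enough that $f(W_R)\subset W_R$ and $W_R\subset A_p\times\mathbb{C}$, set $A_f=\bigcup_{n\ge0}f^{-n}(W_R)$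 and $B_f=(A_p\times\mathbb{C})\setminus A_f$. *)

From Stdlib Require Import Reals List.
Open Scope R_scope.

Definition Cx : Type := (R * R)%type.
Definition C0 : Cx := (0, 0).
Definition C1 : Cx := (1, 0).
Definition Cadd (a b : Cx) : Cx := (fst a + fst b, snd a + snd b).
Definition Cmul (a b : Cx) : Cx :=
  (fst a * fst b - snd a * snd b, fst a * snd b + snd a * fst b).
Definition Cnorm (a : Cx) : R := sqrt (fst a * fst a + snd a * snd a).

(* [a0; a1; ...; ak] represents a0 + a1 X + ... + ak X^k *)
Fixpoint peval (l : list Cx) (z : Cx) : Cx :=
  match l with
  | nil => C0
  | a :: l' => Cadd a (Cmul z (peval l' z))
  end.

Definition monic_deg (l : list Cx) (deg : nat) : Prop :=
  length l = S deg /\ nth deg l C0 = C1.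

(* q : list (list Cx); the m-th entry is the polynomial c_m(z) (ascending). *)
Definition qeval (q : list (list Cx)) (z w : Cx) : Cx :=
  peval (map (fun c => peval c z) q) w.

(* coefficient of the monomial z^n w^m in q *)
Definition qcoef (q : list (list Cx)) (n m : nat) : Cx := nth n (nth m q nil) C0.

(* q(z,w) = b(z) w^d + lower order in w, with b monic of degree gamma, d = deg_w q *)
Definition q_shape (q : list (list Cx)) (d gamma : nat) : Prop :=
  length q = S d /\ monic_deg (nth d q nil) gamma.

Definition poly_product (q : list (list Cx)) : Prop :=
  exists g : Cx -> Cx, forall z w, qeval q z w = g w.

Definition is_alpha (q : list (list Cx)) (delta : nat) (a : R) : Prop :=
  (forall n m, qcoef q n m <> C0 -> INR n / (INR delta - INR m) <= a) /\
  (exists n m, qcoef q n m <> C0 /\ a = INR n / (INR delta - INR m)).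

Definition fmap (p : list Cx) (q : list (list Cx)) (zw : Cx * Cx) : Cx * Cx :=
  (peval p (fst zw), qeval q (fst zw) (snd zw)).

Fixpoint fiter (p : list Cx) (q : list (list Cx)) (n : nat) (zw : Cx * Cx) : Cx * Cx :=
  match n with
  | O => zw
  | S k => fmap p q (fiter p q k zw)
  end.

Fixpoint piter (p : list Cx) (n : nat) (z : Cx) : Cx :=
  match n with
  | O => z
  | S k => peval p (piter p k z)
  end.

Definition logp (x : R) : R := Rmax 0 (ln x).

Definition C2norm (zw : Cx * Cx) : R := Rmax (Cnorm (fst zw)) (Cnorm (snd zw)).

Definition A_p (p : list Cx) (z : Cx) : Prop :=
  forall M : R, exists N : nat, forall n, (N <= n)%nat -> M < Cnorm (piter p n z).

Definition W_R (R0 alpha : R) (zw : Cx * Cx) : Prop :=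
  R0 < Cnorm (fst zw) /\ R0 * Rpower (Cnorm (fst zw)) alpha < Cnorm (snd zw).

Definition A_f (p : list Cx) (q : list (list Cx)) (R0 alpha : R) (zw : Cx * Cx) : Prop :=
  exists n : nat, W_R R0 alpha (fiter p q n zw).

Definition B_f (p : list Cx) (q : list (list Cx)) (R0 alpha : R) (zw : Cx * Cx) : Prop :=
  A_p p (fst zw) /\ ~ A_f p q R0 alpha zw.

Definition Gp_seq (p : list Cx) (delta : nat) (z : Cx) (n : nat) : R :=
  logp (Cnorm (piter p n z)) / (INR delta ^ n).
Definition Gq_seq (p : list Cx) (q : list (list Cx)) (delta : nat) (zw : Cx * Cx) (n : nat) : R :=
  logp (Cnorm (snd (fiter p q n zw))) / (INR delta ^ n).
Definition Gf_seq (p : list Cx) (q : list (list Cx)) (delta : nat) (zw : Cx * Cx) (n : nat) : R :=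
  logp (C2norm (fiter p q n zw)) / (INR delta ^ n).

(* Along an orbit (z_k, w_k) = f^k(z,w) write L_k = logp|z_k| and V_k = logp|w_k|.
   - Since p is monic of degree delta, L_{k+1} = delta L_k + O(1) (monic_log_growth), so
     L_k / delta^k converges to some G_p(z) >= 0 for every z (Gp_converges).
   - The definition of alpha bounds every monomial of q, giving
     V_{k+1} <= alpha delta L_k + d (V_k - alpha L_k)^+ + O(1) (qeval_log_bound); hence the
     positive part of the cone excess V_k - alpha L_k grows like d^k at most and is
     negligible against delta^k (cone_excess_negligible).
   - From below, either G_p(z) = 0, or z escapes and, off B_f, the orbit enters the invariant
     region W_R, where the excess is bounded below (W_R_excess_lower).  Squeezing gives
     V_k / delta^k -> alpha G_p(z) (Gq_converges), and |f^k| = max(|z_k|, |w_k|) gives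
     G_f = max(G_p, G_q) = max(alpha, 1) G_p. *)

From Pilot Require Import Defs.
From Stdlib Require Import Reals List Lra Lia Classical.
From Coquelicot Require Import Coquelicot.
From Coquelicot Require Complex.
Open Scope R_scope.

Lemma Cnorm_Cmod (a : Cx) : Cnorm a = Complex.Cmod a.
Proof. unfold Cnorm, Complex.Cmod; f_equal; simpl; ring. Qed.

Lemma Cnorm_ge0 (a : Cx) : 0 <= Cnorm a.
Proof. apply sqrt_pos. Qed.

Lemma Cnorm_C0 : Cnorm C0 = 0.
Proof. rewrite Cnorm_Cmod; apply Complex.Cmod_0. Qed.

Lemma Cnorm_C1 : Cnorm Defs.C1 = 1.
Proof. rewrite Cnorm_Cmod; apply Complex.Cmod_1. Qed.

Lemma Cnorm_add (a b : Cx) : Cnorm (Cadd a b) <= Cnorm a + Cnorm b.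
Proof. rewrite !Cnorm_Cmod; apply (Complex.Cmod_triangle a b). Qed.

Lemma Cnorm_mul (a b : Cx) : Cnorm (Cmul a b) = Cnorm a * Cnorm b.
Proof. rewrite !Cnorm_Cmod; apply (Complex.Cmod_mult a b). Qed.

Lemma Cnorm_add_rev (a b : Cx) : Cnorm b - Cnorm a <= Cnorm (Cadd a b).
Proof.
  assert (Hb : b = Cadd (Cadd a b) ((- fst a)%R, (- snd a)%R)).
  { destruct a, b; unfold Cadd; simpl; f_equal; ring. }
  assert (Hopp : Cnorm ((- fst a)%R, (- snd a)%R) = Cnorm a).
  { unfold Cnorm; simpl; f_equal; ring. }
  pose proof (Cnorm_add (Cadd a b) ((- fst a)%R, (- snd a)%R)) as H.
  rewrite <- Hb, Hopp in H; lra.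
Qed.

Lemma exp_monotone (x y : R) : x <= y -> exp x <= exp y.
Proof. intros [H|H]; [apply Rlt_le, exp_increasing; exact H | subst; lra]. Qed.

Lemma exp_INR_mult (n : nat) (x : R) : exp (INR n * x) = exp x ^ n.
Proof.
  induction n as [|n IH]; [simpl; rewrite Rmult_0_l; apply exp_0|].
  rewrite S_INR, Rmult_plus_distr_r, Rmult_1_l, exp_plus, IH; simpl; ring.
Qed.

Lemma exp_logp (x : R) : exp (logp x) = Rmax 1 x.
Proof.
  unfold logp. destruct (Rle_lt_dec x 0) as [Hx|Hx].
  - assert (Hln : ln x = 0) by (unfold ln; destruct (Rlt_dec 0 x); [exfalso; lra | reflexivity]).
    rewrite Hln, Rmax_left, Rmax_left by lra; apply exp_0.
  - destruct (Rle_lt_dec 1 x) as [H1|H1].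
    + assert (0 <= ln x) by (rewrite <- ln_1; apply ln_le; lra).
      rewrite !Rmax_right by lra; apply exp_ln; lra.
    + assert (ln x < 0) by (rewrite <- ln_1; apply ln_increasing; lra).
      rewrite !Rmax_left by lra; apply exp_0.
Qed.

Lemma logp_ln (x : R) : logp x = ln (Rmax 1 x).
Proof. rewrite <- exp_logp, ln_exp; reflexivity. Qed.

Lemma logp_ge0 (x : R) : 0 <= logp x.
Proof. apply Rmax_l. Qed.

Lemma Rmax1_pos (x : R) : 0 < Rmax 1 x.
Proof. pose proof (Rmax_l 1 x); lra. Qed.

Lemma logp_upper (x A E : R) : 1 <= A -> 0 <= E -> x <= A * exp E -> logp x <= ln A + E.
Proof.
  intros HA HE Hx.
  assert (H1 : 1 <= exp E) by (rewrite <- exp_0; apply exp_monotone; lra).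
  rewrite logp_ln, <- (ln_exp E), <- ln_mult by (lra || apply exp_pos).
  apply ln_le; [apply Rmax1_pos|]. apply Rmax_lub; nra.
Qed.

Lemma logp_lower (x A E : R) : 0 < A -> exp E <= A * Rmax 1 x -> E <= ln A + logp x.
Proof.
  intros HA Hx. rewrite logp_ln, <- ln_mult by (auto; apply Rmax1_pos).
  rewrite <- (ln_exp E). apply ln_le; [apply exp_pos | exact Hx].
Qed.

Lemma logp_le_compat (x y : R) : x <= y -> logp x <= logp y.
Proof.
  intros H. rewrite !logp_ln. apply ln_le; [apply Rmax1_pos|].
  apply Rle_max_compat_l; exact H.
Qed.

Lemma logp_max (x y : R) : logp (Rmax x y) = Rmax (logp x) (logp y).
Proof.
  unfold Rmax at 1. destruct (Rle_dec x y) as [H|H].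
  - rewrite Rmax_right; [reflexivity | apply logp_le_compat; exact H].
  - rewrite Rmax_left; [reflexivity | apply logp_le_compat; lra].
Qed.

Lemma lt_of_logp_lt (M x : R) : logp M < logp x -> M < x.
Proof.
  intros H. apply exp_increasing in H. rewrite !exp_logp in H.
  unfold Rmax in H. destruct (Rle_dec 1 M), (Rle_dec 1 x); lra.
Qed.

Fixpoint coef_mass (l : list Cx) : R :=
  match l with nil => 0 | a :: l' => Cnorm a + coef_mass l' end.

Lemma coef_mass_ge0 (l : list Cx) : 0 <= coef_mass l.
Proof. induction l as [|a l IH]; simpl; [lra | pose proof (Cnorm_ge0 a); lra]. Qed.

(* Weighted triangle inequality: if c |z|^i <= K for every nonzero coefficient a_i of l,
   then c |l(z)| <= (sum |a_i|) K.  The weight c makes the statement inductive. *)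
Lemma peval_bound (l : list Cx) (z : Cx) (c K : R) : 0 <= c -> 0 <= K ->
  (forall i, nth i l C0 <> C0 -> c * Cnorm z ^ i <= K) ->
  c * Cnorm (peval l z) <= coef_mass l * K.
Proof.
  revert c. induction l as [|a l IH]; intros c Hc HK Hmono; simpl.
  - rewrite Cnorm_C0; lra.
  - pose proof (Cnorm_add a (Cmul z (peval l z))) as Htri. rewrite Cnorm_mul in Htri.
    assert (Hhead : c * Cnorm a <= Cnorm a * K).
    { destruct (classic (a = C0)) as [->|Ha]; [rewrite Cnorm_C0; lra|].
      specialize (Hmono O Ha); simpl in Hmono. pose proof (Cnorm_ge0 a); nra. }
    assert (Htail : (c * Cnorm z) * Cnorm (peval l z) <= coef_mass l * K).
    { apply IH; [pose proof (Cnorm_ge0 z); nra | exact HK |].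
      intros i Hi. specialize (Hmono (S i) Hi); simpl in Hmono; lra. }
    pose proof (Cnorm_ge0 a); nra.
Qed.

Lemma peval_degree_bound (l : list Cx) (n : nat) (z : Cx) : (length l <= S n)%nat ->
  Cnorm (peval l z) <= coef_mass l * Rmax 1 (Cnorm z) ^ n.
Proof.
  intros Hl. rewrite <- (Rmult_1_l (Cnorm _)).
  pose proof (Rmax_l 1 (Cnorm z)) as HM.
  apply peval_bound; [lra | apply pow_le; lra |].
  intros i Hi. rewrite Rmult_1_l.
  assert (Hin : (i <= n)%nat).
  { destruct (Compare_dec.le_lt_dec i n) as [h|h]; [exact h|].
    exfalso; apply Hi, nth_overflow; lia. }
  apply Rle_trans with (Rmax 1 (Cnorm z) ^ i).
  - apply pow_incr; split; [apply Cnorm_ge0 | apply Rmax_r].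
  - apply Rle_pow; [exact HM | exact Hin].
Qed.

Fixpoint Cpow (z : Cx) (n : nat) : Cx :=
  match n with O => Defs.C1 | S k => Cmul z (Cpow z k) end.

Lemma Cnorm_pow (z : Cx) (n : nat) : Cnorm (Cpow z n) = Cnorm z ^ n.
Proof. induction n as [|n IH]; simpl; [apply Cnorm_C1 | rewrite Cnorm_mul, IH; ring]. Qed.

Lemma peval_snoc (l : list Cx) (a z : Cx) :
  peval (l ++ a :: nil) z = Cadd (peval l z) (Cmul (Cpow z (length l)) a).
Proof.
  induction l as [|b l IH]; simpl.
  - destruct a, z; unfold Cadd, Cmul, C0, Defs.C1; simpl; f_equal; ring.
  - rewrite IH. destruct a, b, z, (peval l (r1, r2)), (Cpow (r1, r2) (length l)).
    unfold Cadd, Cmul; simpl; f_equal; ring.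
Qed.

Lemma monic_split (p : list Cx) (D : nat) : monic_deg p D -> p = firstn D p ++ Defs.C1 :: nil.
Proof.
  intros [Hl Hn]. rewrite <- (firstn_skipn D p) at 1. f_equal.
  assert (Hs : length (skipn D p) = 1%nat) by (rewrite length_skipn; lia).
  assert (Hn' : nth 0 (skipn D p) C0 = Defs.C1) by (rewrite nth_skipn, Nat.add_0_r; exact Hn).
  destruct (skipn D p) as [|x [|y r]]; simpl in *; try lia; subst; reflexivity.
Qed.

Lemma monic_dominant (p : list Cx) (D : nat) : (1 <= D)%nat -> monic_deg p D ->
  exists R1, 1 <= R1 /\ forall z, R1 <= Cnorm z -> Cnorm z ^ D <= 2 * Cnorm (peval p z).
Proof.
  intros HD Hm. set (B := coef_mass (firstn D p)).
  exists (Rmax 1 (2 * B)). split; [apply Rmax_l|]. intros z Hz.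
  pose proof (Rmax_l 1 (2 * B)) as H1. pose proof (Rmax_r 1 (2 * B)) as H2.
  assert (Hlow : Cnorm (peval (firstn D p) z) <= B * Cnorm z ^ (D - 1)).
  { rewrite <- (Rmax_right 1 (Cnorm z)) by lra. apply peval_degree_bound.
    rewrite length_firstn; destruct Hm; lia. }
  assert (HzD : Cnorm z ^ D = Cnorm z * Cnorm z ^ (D - 1)).
  { replace D with (S (D - 1)) at 1 by lia; reflexivity. }
  assert (Hpow : 0 <= Cnorm z ^ (D - 1)) by (apply pow_le; lra).
  assert (Hsplit : peval p z = Cadd (peval (firstn D p) z) (Cmul (Cpow z D) Defs.C1)).
  { rewrite (monic_split p D Hm) at 1. rewrite peval_snoc, length_firstn, Nat.min_l
      by (destruct Hm; lia). reflexivity. }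
  pose proof (Cnorm_add_rev (peval (firstn D p) z) (Cmul (Cpow z D) Defs.C1)) as Hrev.
  rewrite Cnorm_mul, Cnorm_pow, Cnorm_C1, Rmult_1_r, <- Hsplit in Hrev.
  nra.
Qed.

Lemma monic_comparable (p : list Cx) (D : nat) : (1 <= D)%nat -> monic_deg p D ->
  exists C, 1 <= C /\ forall z,
    Rmax 1 (Cnorm (peval p z)) <= C * Rmax 1 (Cnorm z) ^ D /\
    Rmax 1 (Cnorm z) ^ D <= C * Rmax 1 (Cnorm (peval p z)).
Proof.
  intros HD Hm. destruct (monic_dominant p D HD Hm) as [R1 [HR1 Hdom]].
  set (A := coef_mass p + 1). set (C := Rmax A (2 * R1 ^ D)).
  assert (HA : 1 <= A) by (pose proof (coef_mass_ge0 p); unfold A; lra).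
  assert (HR1D : 1 <= R1 ^ D) by (apply pow_R1_Rle; exact HR1).
  exists C. split; [apply Rle_trans with A; [exact HA | apply Rmax_l]|]. intros z.
  set (M := Rmax 1 (Cnorm z)). set (P := Rmax 1 (Cnorm (peval p z))).
  assert (HM : 1 <= M) by apply Rmax_l.
  assert (HMD : 1 <= M ^ D) by (apply pow_R1_Rle; exact HM).
  assert (HP : 1 <= P) by apply Rmax_l.
  pose proof (Rmax_l A (2 * R1 ^ D)) as HCA. pose proof (Rmax_r A (2 * R1 ^ D)) as HCR.
  fold C in HCA, HCR. split.
  - assert (Hup : Cnorm (peval p z) <= coef_mass p * M ^ D).
    { apply peval_degree_bound. destruct Hm; lia. }
    pose proof (coef_mass_ge0 p). apply Rmax_lub; unfold A in HCA; nra.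
  - destruct (Rle_lt_dec R1 (Cnorm z)) as [Hfar|Hnear].
    + assert (HMz : M = Cnorm z) by (apply Rmax_right; lra).
      specialize (Hdom z Hfar). rewrite HMz.
      pose proof (Rmax_r 1 (Cnorm (peval p z))). fold P in H. nra.
    + assert (HMR : M ^ D <= R1 ^ D).
      { apply pow_incr; split; [lra | apply Rmax_lub; lra]. }
      nra.
Qed.

Lemma monic_log_growth (p : list Cx) (D : nat) : (1 <= D)%nat -> monic_deg p D ->
  exists c, forall z, Rabs (logp (Cnorm (peval p z)) - INR D * logp (Cnorm z)) <= c.
Proof.
  intros HD Hm. destruct (monic_comparable p D HD Hm) as [C [HC Hcomp]].
  exists (ln C). intros z. destruct (Hcomp z) as [Hup Hlow].
  assert (HE : exp (INR D * logp (Cnorm z)) = Rmax 1 (Cnorm z) ^ D)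
    by (rewrite exp_INR_mult, exp_logp; reflexivity).
  assert (HL : 0 <= INR D * logp (Cnorm z))
    by (apply Rmult_le_pos; [apply pos_INR | apply logp_ge0]).
  apply Rabs_le. split.
  - pose proof (logp_lower (Cnorm (peval p z)) C (INR D * logp (Cnorm z))) as H.
    rewrite HE in H. specialize (H ltac:(lra) Hlow). lra.
  - pose proof (logp_upper (Cnorm (peval p z)) C (INR D * logp (Cnorm z)) HC HL) as H.
    rewrite HE in H. pose proof (Rmax_r 1 (Cnorm (peval p z))). specialize (H ltac:(lra)). lra.
Qed.

Fixpoint qcoef_mass (q : list (list Cx)) : R :=
  match q with nil => 0 | l :: q' => coef_mass l + qcoef_mass q' end.

Lemma qcoef_mass_ge0 (q : list (list Cx)) : 0 <= qcoef_mass q.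
Proof. induction q as [|l q IH]; simpl; [lra | pose proof (coef_mass_ge0 l); lra]. Qed.

Lemma qeval_bound (q : list (list Cx)) (z w : Cx) (c K : R) : 0 <= c -> 0 <= K ->
  (forall n m, qcoef q n m <> C0 -> c * Cnorm w ^ m * Cnorm z ^ n <= K) ->
  c * Cnorm (qeval q z w) <= qcoef_mass q * K.
Proof.
  unfold qeval, qcoef. revert c. induction q as [|l q IH]; intros c Hc HK Hmono; simpl.
  - rewrite Cnorm_C0; lra.
  - pose proof (Cnorm_add (peval l z) (Cmul w (peval (map (fun c0 => peval c0 z) q) w)))
      as Htri.
    rewrite Cnorm_mul in Htri.
    assert (Hhead : c * Cnorm (peval l z) <= coef_mass l * K).
    { apply peval_bound; auto. intros i Hi. specialize (Hmono i O Hi); simpl in Hmono; lra. }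
    assert (Htail : (c * Cnorm w) * Cnorm (peval (map (fun c0 => peval c0 z) q) w)
                    <= qcoef_mass q * K).
    { apply IH; [pose proof (Cnorm_ge0 w); nra | exact HK |].
      intros n m Hi. specialize (Hmono n (S m) Hi); simpl in Hmono; lra. }
    nra.
Qed.

Lemma inv_pow_contracting (D : R) : 1 < D -> Rabs (/ D) < 1.
Proof.
  intros HD. rewrite Rabs_pos_eq by (apply Rlt_le, Rinv_0_lt_compat; lra).
  rewrite <- Rinv_1. apply Rinv_lt_contravar; lra.
Qed.

Lemma const_over_pow_vanishes (c D : R) : 1 < D -> is_lim_seq (fun k => c / D ^ k) 0.
Proof.
  intros HD. apply is_lim_seq_ext with (fun k => c * (/ D) ^ k).
  { intros k. unfold Rdiv. rewrite pow_inv. reflexivity. }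
  replace (Finite 0) with (Rbar_mult c 0) by (simpl; f_equal; ring).
  apply is_lim_seq_scal_l, is_lim_seq_geom, inv_pow_contracting, HD.
Qed.

(* If L_{k+1} = D L_k + O(1) with D > 1, then L_k / D^k converges: its increments
   are dominated by a convergent geometric series. *)
Lemma normalized_limit_exists (L : nat -> R) (D c : R) : 1 < D ->
  (forall k, Rabs (L (S k) - D * L k) <= c) ->
  exists g : R, is_lim_seq (fun k => L k / D ^ k) g.
Proof.
  intros HD Hstep. set (a := fun k => L k / D ^ k). set (t := fun k => a (S k) - a k).
  assert (HDk : forall k, 0 < D ^ k) by (intros; apply pow_lt; lra).
  assert (Ht : forall k, norm (t k) <= scal (c / D) ((/ D) ^ k)).
  { intros k. change (Rabs (t k) <= c / D * (/ D) ^ k).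
    assert (Htk : t k = (L (S k) - D * L k) / D ^ S k).
    { unfold t, a; simpl. field. split; [apply Rgt_not_eq, HDk | lra]. }
    assert (HDS : 0 < D ^ S k) by apply HDk.
    replace (c / D * (/ D) ^ k) with (c / D ^ S k)
      by (rewrite pow_inv; simpl; field; split; [apply Rgt_not_eq, HDk | lra]).
    rewrite Htk. unfold Rdiv. rewrite Rabs_mult, Rabs_inv, (Rabs_pos_eq (D ^ S k)) by lra.
    apply Rmult_le_compat_r; [apply Rlt_le, Rinv_0_lt_compat, HDS|].
    apply Hstep. }
  assert (Hser : ex_series t).
  { apply (ex_series_le t _ Ht).
    apply (@ex_series_scal_l R_AbsRing R_NormedModule (c / D) (fun k => (/ D) ^ k)).
    exists (/ (1 - / D)). apply is_series_geom, inv_pow_contracting, HD. }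
  destruct Hser as [s Hs]. exists (a O + s).
  apply is_lim_seq_incr_1, is_lim_seq_ext with (fun k => a O + sum_n t k).
  { intros k. induction k as [|k IH]; [rewrite sum_O | rewrite sum_Sn, <- Rplus_assoc, IH];
      unfold t; simpl; ring. }
  apply is_lim_seq_plus'; [apply is_lim_seq_const | exact Hs].
Qed.

(* A nonnegative sequence with v_{k+1} <= K + d v_k grows at most like d^k, hence is
   negligible against D^k when d < D. *)
Lemma subcritical_negligible (v : nat -> R) (K d D : R) : 0 <= K -> 2 <= d -> d < D ->
  (forall k, 0 <= v k) -> (forall k, v (S k) <= K + d * v k) ->
  is_lim_seq (fun k => v k / D ^ k) 0.
Proof.
  intros HK Hd HdD Hv Hrec.
  assert (Hgrow : forall k, v k + K <= d ^ k * (v O + K)).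
  { induction k as [|k IH]; simpl; [lra|]. specialize (Hrec k). specialize (Hv k). nra. }
  apply is_lim_seq_le_le with (fun _ => 0) (fun k => (v O + K) * (d / D) ^ k).
  - intros k. assert (HDk : 0 < D ^ k) by (apply pow_lt; lra). split.
    + apply Rdiv_le_0_compat; [apply Hv | exact HDk].
    + unfold Rdiv. rewrite Rpow_mult_distr, pow_inv.
      apply Rmult_le_reg_r with (D ^ k); [exact HDk|].
      replace ((v O + K) * (d ^ k * / D ^ k) * D ^ k) with ((v O + K) * d ^ k)
        by (field; lra).
      rewrite Rmult_assoc, Rinv_l, Rmult_1_r by lra.
      specialize (Hgrow k). nra.
  - apply is_lim_seq_const.
  - replace (Finite 0) with (Rbar_mult (v O + K) 0) by (simpl; f_equal; ring).
    apply is_lim_seq_scal_l, is_lim_seq_geom.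
    rewrite Rabs_pos_eq by (apply Rdiv_le_0_compat; lra).
    apply Rmult_lt_reg_r with D; [lra|]. unfold Rdiv. rewrite Rmult_assoc, Rinv_l; lra.
Qed.

Lemma Rmax_div_pos (a b c : R) : 0 < c -> Rmax a b / c = Rmax (a / c) (b / c).
Proof.
  intros Hc. unfold Rmax. destruct (Rle_dec a b) as [H|H], (Rle_dec (a / c) (b / c)) as [H'|H'];
    try reflexivity; exfalso.
  - apply H'. apply Rmult_le_compat_r; [apply Rlt_le, Rinv_0_lt_compat|]; assumption.
  - apply H. apply Rmult_le_reg_r with (/ c); [apply Rinv_0_lt_compat|]; assumption.
Qed.

Lemma is_lim_seq_Rmax (u v : nat -> R) (l m : R) :
  is_lim_seq u l -> is_lim_seq v m -> is_lim_seq (fun k => Rmax (u k) (v k)) (Rmax l m).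
Proof.
  assert (Hformula : forall x y, Rmax x y = / 2 * (x + y + Rabs (x - y))).
  { intros x y. unfold Rmax, Rabs. destruct (Rle_dec x y), (Rcase_abs (x - y)); lra. }
  intros Hu Hv. rewrite Hformula.
  apply is_lim_seq_ext with (fun k => / 2 * (u k + v k + Rabs (u k - v k))).
  { intros k. symmetry; apply Hformula. }
  apply (is_lim_seq_scal_l _ (/ 2) (l + m + Rabs (l - m))).
  apply is_lim_seq_plus'; [apply is_lim_seq_plus'; assumption|].
  apply (is_lim_seq_abs _ (l - m)), is_lim_seq_minus'; assumption.
Qed.

Lemma fst_fiter (p : list Cx) (q : list (list Cx)) (k : nat) (zw : Cx * Cx) :
  fst (fiter p q k zw) = piter p k (fst zw).
Proof. induction k as [|k IH]; simpl; [reflexivity | rewrite IH; reflexivity]. Qed.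

Section Base_dynamics.
Variables (p : list Cx) (delta : nat).
Hypothesis Hdelta : (2 <= delta)%nat.
Hypothesis Hp : monic_deg p delta.

Lemma delta_gt1 : 1 < INR delta.
Proof. apply (lt_INR 1); lia. Qed.

Lemma Gp_converges (z : Cx) : exists g : R, 0 <= g /\ is_lim_seq (Gp_seq p delta z) g.
Proof.
  destruct (monic_log_growth p delta ltac:(lia) Hp) as [c Hc].
  destruct (normalized_limit_exists (fun k => logp (Cnorm (piter p k z))) (INR delta) c
              delta_gt1 (fun k => Hc (piter p k z))) as [g Hg].
  exists g. split; [|exact Hg].
  assert (Hle : Rbar_le 0 g).
  { apply (is_lim_seq_le (fun _ => 0) (Gp_seq p delta z)); [|apply is_lim_seq_const | exact Hg].
    intros k. apply Rdiv_le_0_compat; [apply logp_ge0 | apply pow_lt; pose proof delta_gt1; lra]. }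
  exact Hle.
Qed.

Lemma escapes_of_Gp_pos (z : Cx) (g : R) :
  is_lim_seq (Gp_seq p delta z) g -> 0 < g -> A_p p z.
Proof.
  intros Hg Hpos M. pose proof delta_gt1 as HD.
  apply is_lim_seq_spec in Hg. destruct (Hg (mkposreal (g / 2) ltac:(lra))) as [N1 HN1].
  pose proof (proj2 (is_lim_seq_spec _ _) (is_lim_seq_geom_p (INR delta) HD)) as Hpow.
  destruct (Hpow (2 * logp M / g)) as [N2 HN2].
  exists (N1 + N2)%nat. intros n Hn. apply lt_of_logp_lt.
  specialize (HN1 n ltac:(lia)). specialize (HN2 n ltac:(lia)). simpl in HN1, HN2.
  apply Rabs_def2 in HN1. destruct HN1 as [_ HN1]. unfold Gp_seq in HN1.
  assert (HDn : 0 < INR delta ^ n) by (apply pow_lt; lra).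
  assert (Hlog : g / 2 * INR delta ^ n < logp (Cnorm (piter p n z))).
  { apply Rmult_lt_reg_r with (/ INR delta ^ n); [apply Rinv_0_lt_compat, HDn|].
    rewrite Rmult_assoc, Rinv_r by lra. fold (logp (Cnorm (piter p n z)) / INR delta ^ n). lra. }
  assert (HM : logp M < g / 2 * INR delta ^ n).
  { apply Rmult_lt_reg_r with (2 / g); [apply Rdiv_lt_0_compat; lra|].
    replace (g / 2 * INR delta ^ n * (2 / g)) with (INR delta ^ n) by (field; lra).
    replace (logp M * (2 / g)) with (2 * logp M / g) by (field; lra). exact HN2. }
  lra.
Qed.

End Base_dynamics.

Section Skew_product.
Variables (p : list Cx) (q : list (list Cx)) (delta d : nat) (alpha : R).
Hypothesis Hdelta : (2 <= delta)%nat.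
Hypothesis Hp : monic_deg p delta.
Hypothesis Hd : (2 <= d)%nat.
Hypothesis Hqlen : (length q <= S d)%nat.
Hypothesis Hdd : (d < delta)%nat.
Hypothesis Halpha : is_alpha q delta alpha.

Lemma monomial_exponents (n m : nat) : qcoef q n m <> C0 ->
  (m <= d)%nat /\ INR n <= alpha * (INR delta - INR m).
Proof.
  intros Hc. assert (Hm : (m <= d)%nat).
  { destruct (Compare_dec.le_lt_dec m d) as [h|h]; [exact h|]. exfalso. apply Hc.
    unfold qcoef. rewrite (nth_overflow q nil) by lia. destruct n; reflexivity. }
  split; [exact Hm|].
  assert (Hgap : INR m < INR delta) by (apply lt_INR; lia).
  destruct Halpha as [Hle _]. specialize (Hle n m Hc).
  apply Rmult_le_reg_r with (/ (INR delta - INR m)); [apply Rinv_0_lt_compat; lra|].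
  rewrite Rmult_assoc, Rinv_r, Rmult_1_r by lra. exact Hle.
Qed.

Lemma alpha_nonneg : 0 <= alpha.
Proof.
  destruct Halpha as [_ [n [m [Hc Heq]]]]. destruct (monomial_exponents n m Hc) as [Hm _].
  assert (INR m < INR delta) by (apply lt_INR; lia). rewrite Heq.
  apply Rdiv_le_0_compat; [apply pos_INR | lra].
Qed.

(* In the coordinates L = logp|z|, V = logp|w|, one application of q raises V to at most
   alpha delta L + d (V - alpha L)^+ + O(1): this is where alpha enters. *)
Lemma qeval_log_bound : exists K, 0 <= K /\ forall z w,
  logp (Cnorm (qeval q z w)) <= K + alpha * INR delta * logp (Cnorm z)
    + INR d * Rmax (logp (Cnorm w) - alpha * logp (Cnorm z)) 0.
Proof.
  set (A := qcoef_mass q + 1).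
  assert (HA : 1 <= A) by (pose proof (qcoef_mass_ge0 q); unfold A; lra).
  exists (ln A). split; [rewrite <- ln_1; apply ln_le; lra|]. intros z w.
  set (L := logp (Cnorm z)). set (V := logp (Cnorm w)).
  set (E := alpha * INR delta * L + INR d * Rmax (V - alpha * L) 0).
  pose proof alpha_nonneg as Ha. pose proof (logp_ge0 (Cnorm z)) as HL. fold L in HL.
  pose proof (Rmax_l (V - alpha * L) 0). pose proof (Rmax_r (V - alpha * L) 0).
  assert (HdD : 0 <= INR d <= INR delta) by (split; [apply pos_INR | apply le_INR; lia]).
  assert (HE : 0 <= E).
  { unfold E. apply Rplus_le_le_0_compat; repeat apply Rmult_le_pos; lra. }
  enough (Hq : Cnorm (qeval q z w) <= A * exp E)
    by (pose proof (logp_upper _ A E HA HE Hq); unfold E in *; lra).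
  assert (Hz : Cnorm z <= exp L) by (unfold L; rewrite exp_logp; apply Rmax_r).
  assert (Hw : Cnorm w <= exp V) by (unfold V; rewrite exp_logp; apply Rmax_r).
  pose proof (qeval_bound q z w 1 (exp E) ltac:(lra) (Rlt_le _ _ (exp_pos E))) as Hb.
  rewrite Rmult_1_l in Hb. eapply Rle_trans; [apply Hb|].
  - intros n m Hc. rewrite Rmult_1_l. destruct (monomial_exponents n m Hc) as [Hm Hn].
    apply Rle_trans with (exp (INR m * V + INR n * L)).
    + rewrite exp_plus, !exp_INR_mult. apply Rmult_le_compat;
        try (apply pow_le, Cnorm_ge0); apply pow_incr; split; auto using Cnorm_ge0.
    + apply exp_monotone. unfold E.
      assert (INR m <= INR d) by (apply le_INR; exact Hm). pose proof (pos_INR m). nra.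
  - pose proof (exp_pos E). unfold A; lra.
Qed.

Definition cone_excess (zw : Cx * Cx) (k : nat) : R :=
  logp (Cnorm (snd (fiter p q k zw))) - alpha * logp (Cnorm (fst (fiter p q k zw))).

(* The positive part of the excess obeys e_{k+1} <= K + d e_k, so it grows at most like
   d^k and is negligible against delta^k. *)
Lemma cone_excess_negligible (zw : Cx * Cx) :
  is_lim_seq (fun k => Rmax (cone_excess zw k) 0 / INR delta ^ k) 0.
Proof.
  destruct (monic_log_growth p delta ltac:(lia) Hp) as [c Hc].
  destruct qeval_log_bound as [K [HK Hq]].
  pose proof alpha_nonneg as Ha.
  assert (Hc0 : 0 <= c) by (pose proof (Rabs_pos (logp (Cnorm (peval p C0))
                               - INR delta * logp (Cnorm C0))); pose proof (Hc C0); lra).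
  apply (subcritical_negligible _ (K + alpha * c) (INR d) (INR delta)).
  - nra.
  - apply (le_INR 2); lia.
  - apply lt_INR; lia.
  - intros k; apply Rmax_r.
  - intros k. pose proof (Rmax_r (cone_excess zw k) 0). pose proof (pos_INR d).
    apply Rmax_lub; [|nra].
    unfold cone_excess at 1; simpl.
    set (z := fst (fiter p q k zw)). set (w := snd (fiter p q k zw)).
    change (cone_excess zw k) with (logp (Cnorm w) - alpha * logp (Cnorm z)).
    specialize (Hq z w). pose proof (Rle_trans _ _ _ (Rabs_maj2 _) (Hc z)) as Hlow.
    assert (alpha * (INR delta * logp (Cnorm z) - c) <= alpha * logp (Cnorm (peval p z)))
      by (apply Rmult_le_compat_l; lra).
    lra.
Qed.

Lemma W_R_excess_lower (R0 : R) (zw : Cx * Cx) : 0 < R0 -> W_R R0 alpha zw ->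
  Rmin (ln R0) 0 <= logp (Cnorm (snd zw)) - alpha * logp (Cnorm (fst zw)).
Proof.
  intros HR [Hz Hw]. pose proof alpha_nonneg as Ha.
  assert (Hpow : 0 < Rpower (Cnorm (fst zw)) alpha) by apply exp_pos.
  assert (Hln : ln R0 + alpha * ln (Cnorm (fst zw)) < ln (Cnorm (snd zw))).
  { rewrite <- ln_Rpower, <- ln_mult by (try apply Rmult_lt_0_compat; assumption).
    apply ln_increasing; [apply Rmult_lt_0_compat; assumption | exact Hw]. }
  unfold logp, Rmin, Rmax.
  destruct (Rle_dec (ln R0) 0), (Rle_dec 0 (ln (Cnorm (fst zw)))),
    (Rle_dec 0 (ln (Cnorm (snd zw)))); nra.
Qed.

(* Off B_f, logp|w_k|/delta^k -> alpha G_p(z): the excess is negligible from above, and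
   either G_p(z) = 0 or the orbit enters W_R, where the excess is bounded below. *)
Lemma Gq_converges (R0 g : R) (zw : Cx * Cx) : 0 < R0 ->
  (forall x, W_R R0 alpha x -> W_R R0 alpha (fmap p q x)) ->
  ~ B_f p q R0 alpha zw -> 0 <= g -> is_lim_seq (Gp_seq p delta (fst zw)) g ->
  is_lim_seq (Gq_seq p q delta zw) (alpha * g).
Proof.
  intros HR HWinv HB Hg0 Hg. pose proof alpha_nonneg as Ha. pose proof (delta_gt1 delta Hdelta) as HD.
  assert (HDk : forall k, 0 < INR delta ^ k) by (intros; apply pow_lt; lra).
  set (Gp := Gp_seq p delta (fst zw)).
  assert (Hsplit : forall k,
             Gq_seq p q delta zw k = cone_excess zw k / INR delta ^ k + alpha * Gp k).
  { intros k. unfold Gq_seq, Gp, Gp_seq, cone_excess. rewrite fst_fiter.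
    field. apply Rgt_not_eq, HDk. }
  set (upper := fun k => Rmax (cone_excess zw k) 0 / INR delta ^ k + alpha * Gp k).
  assert (Hupper : forall k, Gq_seq p q delta zw k <= upper k).
  { intros k. rewrite Hsplit. apply Rplus_le_compat_r, Rmult_le_compat_r;
      [apply Rlt_le, Rinv_0_lt_compat, HDk | apply Rmax_l]. }
  assert (Hlim_upper : is_lim_seq upper (alpha * g)).
  { rewrite <- (Rplus_0_l (alpha * g)).
    apply is_lim_seq_plus'; [apply cone_excess_negligible | apply (is_lim_seq_scal_l _ alpha g Hg)]. }
  destruct Hg0 as [Hpos|Hzero].
  - assert (HAf : A_f p q R0 alpha zw).
    { apply NNPP. intros HnA. apply HB. split; [exact (escapes_of_Gp_pos p delta Hdelta _ g Hg Hpos) | exact HnA]. }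
    destruct HAf as [N HN].
    assert (Hfwd : forall k, W_R R0 alpha (fiter p q (k + N) zw)).
    { induction k as [|k IH]; [exact HN | simpl; apply HWinv, IH]. }
    apply is_lim_seq_le_le_loc with
      (fun k => Rmin (ln R0) 0 / INR delta ^ k + alpha * Gp k) upper; [| |exact Hlim_upper].
    + exists N. intros k Hk. split; [|apply Hupper]. rewrite Hsplit.
      apply Rplus_le_compat_r, Rmult_le_compat_r; [apply Rlt_le, Rinv_0_lt_compat, HDk|].
      replace k with ((k - N) + N)%nat by lia. apply W_R_excess_lower; [exact HR | apply Hfwd].
    + rewrite <- (Rplus_0_l (alpha * g)).
      apply is_lim_seq_plus'; [apply const_over_pow_vanishes, HD | apply (is_lim_seq_scal_l _ alpha g Hg)].
  - subst g. rewrite Rmult_0_r in *.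
    apply is_lim_seq_le_le with (fun _ => 0) upper; [|apply is_lim_seq_const | exact Hlim_upper].
    intros k. split; [apply Rdiv_le_0_compat; [apply logp_ge0 | apply HDk] | apply Hupper].
Qed.

End Skew_product.

Theorem corollary4p10
  (p : list Cx) (q : list (list Cx)) (delta d gamma : nat) (alpha R0 : R)
  (Hdelta : (2 <= delta)%nat) (Hp : monic_deg p delta)
  (Hd : (2 <= d)%nat) (Hq : q_shape q d gamma)
  (Hdd : (d < delta)%nat)
  (Halpha : is_alpha q delta alpha)
  (Halpha_eq : alpha = INR gamma / (INR delta - INR d))
  (Hnpp : ~ poly_product q)
  (HR : 0 < R0)
  (HWinv : forall zw, W_R R0 alpha zw -> W_R R0 alpha (fmap p q zw))
  (HWA : forall zw, W_R R0 alpha zw -> A_p p (fst zw)) :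
  forall zw : Cx * Cx, ~ B_f p q R0 alpha zw ->
    exists g : R,
      Un_cv (Gp_seq p delta (fst zw)) g /\
      Un_cv (Gq_seq p q delta zw) (alpha * g) /\
      Un_cv (Gf_seq p q delta zw) (Rmax alpha 1 * g).
Proof.
  intros zw HB.
  assert (Hqlen : (length q <= S d)%nat) by (destruct Hq as [Hl _]; lia).
  pose proof (alpha_nonneg q delta d alpha Hdelta Hd Hqlen Hdd Halpha) as Ha.
  destruct (Gp_converges p delta Hdelta Hp (fst zw)) as [g [Hg0 HGp]].
  pose proof (Gq_converges p q delta d alpha Hdelta Hp Hd Hqlen Hdd Halpha R0 g zw
                HR HWinv HB Hg0 HGp) as HGq.
  exists g. rewrite <- !is_lim_seq_Reals. split; [exact HGp | split; [exact HGq |]].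
  (* |f^k(z,w)| = max(|z_k|, |w_k|), so G_f = max(G_p, G_q). *)
  apply is_lim_seq_ext with
    (fun k => Rmax (Gp_seq p delta (fst zw) k) (Gq_seq p q delta zw k)).
  { intros k. unfold Gf_seq, Gp_seq, Gq_seq, C2norm.
    rewrite logp_max, Rmax_div_pos, fst_fiter by (apply pow_lt, (lt_INR 0); lia).
    reflexivity. }
  replace (Rmax alpha 1 * g) with (Rmax g (alpha * g))
    by (unfold Rmax; destruct (Rle_dec g (alpha * g)), (Rle_dec alpha 1); nra).
  apply is_lim_seq_Rmax; assumption.
Qed.
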